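(* Let $(G,\sigma)$ be a finite connected signed graph and $p>1$. Then the first (smallest) nonzero eigenvalue $\lambda_p^\sigma$ of the signed $p$-Laplacian $\Delta_p^\sigma$ satisfies \[ \lambda_{p}^{\sigma}\geq\frac{1}{2}\left(\frac{2}{p\cdot \mathrm{vol}(G)}\right)^{p}, \] where $\mathrm{vol}(G)=\sum_{x\in V}d_x$.
   Context: $G=(V,E)$ is a finite simple connected graph with degrees $d_x$; $\sigma:E\to\{\pm1\}$, $\sigma_{xy}=\sigma(\{x,y\})$. For $p>1$, $\Delta_{p}^{\sigma}f(x)=\frac{1}{d_{x}}\sum_{y\sim x}|\sigma_{xy}f(y)-f(x)|^{p-2}(\sigma_{xy}f(y)-f(x))$ (with $|t|^{p-2}t=0$ at $t=0$). A real $\lambda$ is an eigenvalue of $\Delta_p^\sigma$ if there is a nonzero $f$ with $-\Delta_{p}^{\sigma}f(x)=\lambda|f(x)|^{p-2}f(x)$ for all $x\in V$. *)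

From HB Require Import structures.
From mathcomp Require Import all_boot all_order all_algebra.
From mathcomp Require Import all_classical all_reals.
From mathcomp Require Import exp.
Set Implicit Arguments. Unset Strict Implicit. Unset Printing Implicit Defensive.
Import Order.TTheory GRing.Theory Num.Theory.
Local Open Scope ring_scope.

Definition simple_graph (T : finType) (e : rel T) : Prop :=
  symmetric e /\ irreflexive e.

Definition connected_graph (T : finType) (e : rel T) : Prop :=
  forall x y : T, connect e x y.

(* A signature sigma : E -> {+1,-1}, encoded as a function on pairs
   which is symmetric and +-1 valued on edges (its values off edges are
   irrelevant). *)
Definition signature (T : finType) (R : numDomainType) (e : rel T)
  (sigma : T -> T -> R) : Prop :=
  forall x y, e x y -> sigma x y = sigma y x /\ (sigma x y = 1 \/ sigma x y = -1).

Definition deg (T : finType) (e : rel T) (x : T) : nat := #|[set y | e x y]|.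

Definition vol (R : numDomainType) (T : finType) (e : rel T) : R :=
  \sum_(x : T) (deg e x)%:R.

Definition phip (R : realType) (p : R) (t : R) : R :=
  if t == 0 then 0 else powR `|t| (p - 2) * t.

Definition signed_pLap (R : realType) (T : finType) (e : rel T)
  (sigma : T -> T -> R) (p : R) (f : T -> R) (x : T) : R :=
  (deg e x)%:R^-1 * \sum_(y : T | e x y) phip p (sigma x y * f y - f x).

Definition is_eigenvalue (R : realType) (T : finType) (e : rel T)
  (sigma : T -> T -> R) (p : R) (lambda : R) : Prop :=
  exists f : T -> R, (exists x, f x != 0) /\
    forall x, - signed_pLap e sigma p f x = lambda * phip p (f x).

From HB Require Import structures.
From mathcomp Require Import all_boot all_order all_algebra.
From mathcomp Require Import all_classical all_reals.
From mathcomp Require Import interval_inference exp convex hoelder.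
From mathcomp Require Import ring lra.
Set Implicit Arguments.
Unset Strict Implicit.
Unset Printing Implicit Defensive.
Import Order.TTheory GRing.Theory Num.Theory.
Local Open Scope ring_scope.

(* Normalise an eigenfunction f for lambda != 0 so that f x0 = max |f| > 0.
   Green's formula gives 2 lambda sum_x d_x |f x|^p = sum over the darts (x, y)
   of |sigma_xy f y - f x|^p, so lambda > 0 and the left-hand side is at most
   2 lambda vol f(x0)^p.  If some simple path from x0 ends at a vertex z with
   sigma(path) f z <= 0, the triangle inequality along the path, traversed in
   both directions, gives 2 f x0 <= sum of |sigma_xy f y - f x| over at most vol
   darts, and the power mean inequality turns this into
   (2 f x0)^p <= vol^(p-1) 2 lambda vol f(x0)^p, i.e. lambda >= (2/vol)^p / 2,
   which is stronger than the claim.  Otherwise the sign of f at every vertex is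
   the sign of every simple path from x0 to it, so x |-> sg (f x) switches sigma
   to the all-positive signature.  The switched flux
   sum_x sg (f x) sum_(y ~ x) |sigma_xy f y - f x|^(p-2) (sigma_xy f y - f x)
   then vanishes by antisymmetry, whereas the eigenvalue equation makes it
   -lambda sum_x d_x |f x|^(p-1) != 0. *)

Section PowerMean.
Variable R : realType.

Lemma powR_convex (r t x y : R) : 1 <= r -> 0 <= t -> t <= 1 -> 0 <= x -> 0 <= y ->
  (t * x + (1 - t) * y) `^ r <= t * x `^ r + (1 - t) * y `^ r.
Proof.
move=> r1 t0 t1 x0 y0.
have := @convex_powR R r r1 (Itv01 t0 t1) x y.
by rewrite !inE /= !in_itv /= !andbT !convRE => /(_ x0 y0).
Qed.

Lemma powR_avg_le (r : R) (I : Type) (F : I -> R) (a : I) (s : seq I) :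
  1 <= r -> (forall i, 0 <= F i) ->
  ((\sum_(i <- a :: s) F i) / (size s).+1%:R) `^ r
    <= (\sum_(i <- a :: s) F i `^ r) / (size s).+1%:R.
Proof.
move=> r1 F0; elim: s a => [|b s IH] a; first by rewrite !big_seq1 !divr1.
set n : R := (size s).+1%:R; have n0 : 0 < n by rewrite ltr0n.
have n10 : 0 < n + 1 by rewrite addr_gt0.
have -> : (size (b :: s)).+1%:R = n + 1 by rewrite -natr1.
set t := n / (n + 1).
have t0 : 0 <= t by rewrite divr_ge0 ?ltW.
have t1 : t <= 1 by rewrite ler_pdivrMr ?mul1r ?lerDl.
have S0 : 0 <= (\sum_(i <- b :: s) F i) / n by rewrite divr_ge0 ?sumr_ge0 ?ltW.
rewrite [\sum_(i <- a :: _) F i]big_cons [\sum_(i <- a :: _) F i `^ r]big_cons.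
have -> : (F a + \sum_(i <- b :: s) F i) / (n + 1)
    = t * ((\sum_(i <- b :: s) F i) / n) + (1 - t) * F a.
  by rewrite /t; field; rewrite !gt_eqF.
have -> : (F a `^ r + \sum_(i <- b :: s) F i `^ r) / (n + 1)
    = t * ((\sum_(i <- b :: s) F i `^ r) / n) + (1 - t) * F a `^ r.
  by rewrite /t; field; rewrite !gt_eqF.
apply: (le_trans (powR_convex r1 t0 t1 S0 (F0 a))).
by have := IH b; rewrite -/n lerD2r => /(ler_wpM2l t0).
Qed.

Lemma powR_sum_le (r : R) (I : Type) (F : I -> R) (s : seq I) :
  1 <= r -> (forall i, 0 <= F i) ->
  (\sum_(i <- s) F i) `^ r <= (size s)%:R `^ (r - 1) * \sum_(i <- s) F i `^ r.
Proof.
move=> r1 F0; have r0 : 0 < r by apply: lt_le_trans r1.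
case: s => [|a s]; first by rewrite !big_nil powR0 ?mulr0 ?gt_eqF.
rewrite [size _]/=; set n : R := (size s).+1%:R; have n0 : 0 < n by rewrite ltr0n.
have -> : \sum_(i <- a :: s) F i = n * ((\sum_(i <- a :: s) F i) / n).
  by rewrite mulrC divfK ?gt_eqF.
rewrite powRM ?(ltW n0) ?divr_ge0 ?sumr_ge0 ?(ltW n0) //.
have := ler_wpM2l (powR_ge0 n r) (powR_avg_le a s r1 F0); rewrite -/n => avg_le.
apply: (le_trans avg_le).
rewrite -(mulr_powRB1 (ltW n0) r0) -/n.
by rewrite le_eqVlt; apply/orP; left; apply/eqP; field; rewrite gt_eqF.
Qed.

End PowerMean.

Section PhiP.
Variables (R : realType) (p : R).

Lemma phipN t : phip p (- t) = - phip p t.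
Proof. by rewrite /phip oppr_eq0; case: eqP => _; rewrite ?oppr0 // normrN mulrN. Qed.

Lemma phipMsign s t : s = 1 \/ s = -1 -> phip p (s * t) = s * phip p t.
Proof. by case=> ->; rewrite ?mul1r // !mulN1r phipN. Qed.

Lemma phip_gt0 t : 0 < t -> 0 < phip p t.
Proof. by move=> t0; rewrite /phip gt_eqF // mulr_gt0 // powR_gt0 // normr_gt0 gt_eqF. Qed.

Lemma phip_ge0 t : 0 <= t -> 0 <= phip p t.
Proof.
move=> t0; have [->|tn0] := eqVneq t 0; first by rewrite /phip eqxx.
by apply/ltW/phip_gt0; rewrite lt_def tn0.
Qed.

Lemma phip_eq0 t : (phip p t == 0) = (t == 0).
Proof.
rewrite /phip; case: ifP => [_|t0]; first by rewrite eqxx.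
by rewrite mulf_eq0 powR_eq0 normr_eq0 t0.
Qed.

Lemma mul_phip t : p != 0 -> t * phip p t = `|t| `^ p.
Proof.
move=> p0; rewrite /phip; have [->|t0] := eqVneq t 0; first by rewrite mulr0 normr0 powR0.
have -> : `|t| `^ p = `|t| `^ (p - 2) * `|t| ^+ 2.
  by rewrite -powR_mulrn // -powRD ?normr_eq0 ?t0 ?implybT // subrK.
by rewrite real_normK ?num_real // mulrCA expr2.
Qed.

End PhiP.

Section SignedPaths.
Variables (R : realType) (T : finType) (e : rel T) (sigma : T -> T -> R).
Hypotheses (e_sym : symmetric e) (e_irr : irreflexive e)
  (sigma_sign : signature e sigma).

Fixpoint path_sign (x : T) (pa : seq T) : R :=
  if pa is y :: pa' then sigma x y * path_sign y pa' else 1.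

Fixpoint path_edges (x : T) (pa : seq T) : seq (T * T) :=
  if pa is y :: pa' then (x, y) :: path_edges y pa' else [::].

(* [g] switches [sigma] to the all-positive signature: [sigma x y = g x * g y]. *)
Definition balancing (g : T -> R) : Prop :=
  (forall x, g x = 1 \/ g x = -1) /\ (forall x y, e x y -> g y = g x * sigma x y).

Lemma path_sign_rcons x pa y :
  path_sign x (rcons pa y) = path_sign x pa * sigma (last x pa) y.
Proof. by elim: pa x => [|z pa IH] x /=; rewrite ?mulr1 ?mul1r // IH mulrA. Qed.

Lemma path_sign_pm x pa : path e x pa -> path_sign x pa = 1 \/ path_sign x pa = -1.
Proof.
elim: pa x => [|y pa IH] x /=; first by left.
case/andP => /sigma_sign[_ [->|->]] /IH[->|->];
  rewrite ?mulr1 ?mulrN1 ?opprK; by [left|right|right|left].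
Qed.

Lemma mem_path_edges x pa a b :
  (a, b) \in path_edges x pa -> (a \in x :: pa) && (b \in pa).
Proof.
elim: pa x => [|y pa IH] x //=.
rewrite in_cons => /orP[/eqP[-> ->]|/IH/andP[ha hb]]; first by rewrite !mem_head.
by rewrite in_cons ha orbT /= in_cons hb orbT.
Qed.

Lemma path_edgesP x pa u : path e x pa -> u \in path_edges x pa -> e u.1 u.2.
Proof.
elim: pa x => [|y pa IH] x //= /andP[exy hpa].
by rewrite in_cons => /orP[/eqP-> //|/(IH _ hpa)].
Qed.

Lemma uniq_path_edges x pa : uniq (x :: pa) -> uniq (path_edges x pa).
Proof.
elim: pa x => [|y pa IH] x //= /andP[]; rewrite in_cons negb_or => /andP[xy xpa] ypa.
rewrite IH // andbT; apply/negP => /mem_path_edges/andP[+ _].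
by rewrite in_cons (negbTE xy) (negbTE xpa).
Qed.

Lemma path_edges_rev x pa a b : uniq (x :: pa) ->
  (a, b) \in path_edges x pa -> (b, a) \notin path_edges x pa.
Proof.
elim: pa x => [|y pa IH] x //= /andP[]; rewrite in_cons negb_or => /andP[xy xpa] ypa.
rewrite !in_cons => /orP[/eqP[-> ->]|ab]; apply/norP; split.
- by rewrite xpair_eqE (negbTE xy) andbF.
- by apply/negP => /mem_path_edges/andP[_]; rewrite (negbTE xpa).
- by apply/negP => /eqP[bx _]; move: ab => /mem_path_edges/andP[_]; rewrite bx (negbTE xpa).
- exact: IH.
Qed.

Lemma uniq_path_darts x pa : uniq (x :: pa) ->
  uniq (path_edges x pa ++ map swap_pair (path_edges x pa)).
Proof.
move=> xpa_uniq; rewrite cat_uniq uniq_path_edges //=.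
rewrite map_inj_uniq ?uniq_path_edges ?andbT //; last exact: can_inj swap_pairK.
apply/hasPn => _ /mapP[[a b] ab ->]; exact: path_edges_rev ab.
Qed.

Lemma sigma_norm x y : e x y -> `|sigma x y| = 1.
Proof. by case/sigma_sign => _ [->|->]; rewrite ?normrN normr1. Qed.

Lemma path_sign_telescope (f : T -> R) x pa : path e x pa ->
  `|f x - path_sign x pa * f (last x pa)|
    <= \sum_(u <- path_edges x pa) `|sigma u.1 u.2 * f u.2 - f u.1|.
Proof.
elim: pa x => [|y pa IH] x /=; first by rewrite mul1r subrr normr0 big_nil.
case/andP => exy hpa; rewrite big_cons /=.
have -> : f x - sigma x y * path_sign y pa * f (last y pa) =
  (f x - sigma x y * f y) + sigma x y * (f y - path_sign y pa * f (last y pa)) by ring.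
apply: (le_trans (ler_normD _ _)).
by rewrite normrM sigma_norm // mul1r distrC lerD2l IH.
Qed.

Lemma connect_simple_path x0 y : connect e x0 y ->
  exists pa, [/\ path e x0 pa, uniq (x0 :: pa) & last x0 pa = y].
Proof.
move=> /connectP[pa0 hpa0 ->].
by case/shortenP: hpa0 => pa hpa upa _; exists pa.
Qed.

Lemma balancing_of_path_sign (x0 : T) (g : T -> R) :
  (forall y, connect e x0 y) ->
  (forall pa, path e x0 pa -> uniq (x0 :: pa) -> path_sign x0 pa = g (last x0 pa)) ->
  balancing g.
Proof.
move=> conn gP; split=> [x|x y exy].
  have [pa [hpa upa <-]] := connect_simple_path (conn x).
  by rewrite -gP //; apply: path_sign_pm.
have extend pa u v : path e x0 pa -> uniq (x0 :: pa) -> last x0 pa = u ->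
    v \notin x0 :: pa -> e u v -> g v = g u * sigma u v.
  move=> hpa upa <- vpa euv.
  have hpa' : path e x0 (rcons pa v) by rewrite rcons_path hpa.
  have upa' : uniq (x0 :: rcons pa v) by rewrite -rcons_cons rcons_uniq vpa.
  by have := gP _ hpa' upa'; rewrite last_rcons path_sign_rcons (gP _ hpa upa) => <-.
have [sxy_sym sxy] := sigma_sign exy.
have [pa [hpa upa xlast]] := connect_simple_path (conn x).
have [ypa|ynot] := boolP (y \in x0 :: pa); last exact: extend hpa upa xlast ynot exy.
(* When y already lies on the path to x, the prefix ending at y is a simple path
   avoiding x, so the edge is used in the direction y -> x instead. *)
suff -> : g x = g y * sigma y x.
  by rewrite -mulrA -sxy_sym; case: sxy => ->; rewrite ?mulrNN !mulr1.
case/splitPl: ypa xlast hpa upa => pa1 pa2 ylast.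
rewrite cat_path last_cat ylast -cat_cons cat_uniq.
move=> xlast /andP[hpa1 _] /and3P[upa1 upa12 _].
apply: extend hpa1 upa1 ylast _ _; last by rewrite e_sym.
have xy : x != y by apply: contraTneq exy => ->; rewrite e_irr.
have : last y pa2 \in y :: pa2 by exact: mem_last.
rewrite xlast in_cons (negbTE xy) /= => xpa2.
by apply: contra upa12 => xpa1; apply/hasP; exists x.
Qed.

Lemma sg_balancing (x0 : T) (f : T -> R) :
  (forall y, connect e x0 y) ->
  (forall pa, path e x0 pa -> uniq (x0 :: pa) -> 0 < path_sign x0 pa * f (last x0 pa)) ->
  balancing (fun x => Num.sg (f x)).
Proof.
move=> conn f_pos; apply: balancing_of_path_sign conn _ => pa hpa upa.
move: (f_pos _ hpa upa); case: (path_sign_pm hpa) => ->.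
  by rewrite mul1r => /gtr0_sg.
by rewrite mulN1r oppr_gt0 => /ltr0_sg.
Qed.

End SignedPaths.

Section Darts.
Variables (T : finType) (e : rel T).

Definition darts : seq (T * T) := enum [pred u : T * T | e u.1 u.2].

Lemma sum_darts (R : nmodType) (F : T * T -> R) :
  \sum_(u <- darts) F u = \sum_x \sum_(y | e x y) F (x, y).
Proof. by rewrite big_enum pair_big_dep; apply: eq_big => -[x y]. Qed.

Lemma vol_darts (R : realType) : vol R e = (size darts)%:R.
Proof.
rewrite /vol -sum1_size sum_darts natr_sum; apply: eq_bigr => x _.
by rewrite /deg -sum1_card; congr _%:R; apply: eq_bigl => y; rewrite inE.
Qed.

Lemma sum_le_darts (R : numDomainType) (s : seq (T * T)) (F : T * T -> R) :
  uniq s -> all (fun u => e u.1 u.2) s -> (forall u, 0 <= F u) ->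
  \sum_(u <- s) F u <= \sum_(u <- darts) F u.
Proof.
move=> s_uniq s_edges F_ge0.
rewrite (perm_big [seq u <- darts | u \in s]); last first.
  apply: uniq_perm => //; first by rewrite filter_uniq ?enum_uniq.
  by move=> u; rewrite mem_filter mem_enum inE andb_idr // => /(allP s_edges).
by rewrite big_filter big_mkcond ler_sum // => u _; case: ifP.
Qed.

End Darts.

Section Eigenpairs.
Variables (R : realType) (T : finType) (e : rel T) (sigma : T -> T -> R) (p : R).
Hypotheses (e_sym : symmetric e) (sigma_sign : signature e sigma).

Definition p_energy (f : T -> R) : R :=
  \sum_x \sum_(y | e x y) `|sigma x y * f y - f x| `^ p.

Definition p_mass (f : T -> R) : R := \sum_x (deg e x)%:R * `|f x| `^ p.

Definition is_eigenpair (f : T -> R) (lambda : R) : Prop :=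
  forall x, - signed_pLap e sigma p f x = lambda * phip p (f x).

Lemma p_energy_darts f :
  p_energy f = \sum_(u <- darts e) `|sigma u.1 u.2 * f u.2 - f u.1| `^ p.
Proof. by rewrite sum_darts. Qed.

Lemma is_eigenpairN f lambda :
  is_eigenpair f lambda -> is_eigenpair (fun x => - f x) lambda.
Proof.
move=> eig x; rewrite phipN mulrN -eig; congr (- _).
rewrite /signed_pLap -mulrN -sumrN; congr (_ * _); apply: eq_bigr => y _.
by rewrite -phipN; congr (phip p _); ring.
Qed.

Lemma sum_edges_swap (F : T -> T -> R) :
  \sum_x \sum_(y | e x y) F x y = \sum_x \sum_(y | e x y) F y x.
Proof.
under eq_bigr do rewrite big_mkcond.
rewrite exchange_big /=; apply: eq_bigr => y _.
by rewrite [RHS]big_mkcond; apply: eq_bigr => x _; rewrite e_sym.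
Qed.

Lemma sum_edges_antisym (F : T -> T -> R) :
  (forall x y, e x y -> F y x = - F x y) -> \sum_x \sum_(y | e x y) F x y = 0.
Proof.
move=> F_anti; apply/eqP; rewrite -[_ == 0]orFb -(mulrn_eq0 _ 2) mulr2n.
rewrite {2}sum_edges_swap -big_split big1 // => x _.
by rewrite -big_split big1 // => y exy; rewrite /= (F_anti x y exy) subrr.
Qed.

(* Stated without the factor [(deg e x)%:R^-1], so that it also holds at
   isolated vertices, where [signed_pLap] is 0. *)
Lemma deg_mul_signed_pLap f x :
  (deg e x)%:R * signed_pLap e sigma p f x
    = \sum_(y | e x y) phip p (sigma x y * f y - f x).
Proof.
rewrite /signed_pLap mulrA; have [d0|d0] := eqVneq (deg e x) 0%N.
  rewrite d0 !mul0r big_pred0 ?mul0r // => y; move/card0_eq: d0 => /(_ y).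
  by rewrite !inE.
by rewrite mulfV ?mul1r ?pnatr_eq0.
Qed.

Lemma eigenpair_local_flux f lambda x : is_eigenpair f lambda ->
  \sum_(y | e x y) phip p (sigma x y * f y - f x)
    = - (lambda * ((deg e x)%:R * phip p (f x))).
Proof.
by move=> eig; rewrite -deg_mul_signed_pLap -[signed_pLap _ _ _ _ _]opprK eig; ring.
Qed.

Lemma green_identity f : p != 0 ->
  2 * \sum_x f x * \sum_(y | e x y) phip p (sigma x y * f y - f x) = - p_energy f.
Proof.
move=> p0; pose B x y := f x * phip p (sigma x y * f y - f x).
have B_edge x y : e x y -> B x y + B y x = - `|sigma x y * f y - f x| `^ p.
  move=> exy; have [sxy_sym sxy] := sigma_sign exy; rewrite /B.
  have -> : sigma y x * f x - f y = - sigma x y * (sigma x y * f y - f x).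
    by rewrite -sxy_sym; case: sxy => ->; ring.
  rewrite phipMsign; last by case: sxy => ->; rewrite ?opprK; [right|left].
  by rewrite -(mul_phip _ p0); ring.
under eq_bigr do rewrite mulr_sumr.
rewrite mulr_natl mulr2n {2}sum_edges_swap -big_split /= -sumrN.
apply: eq_bigr => x _; rewrite -big_split /= -sumrN.
by apply: eq_bigr => y exy; rewrite B_edge.
Qed.

Lemma rayleigh_identity f lambda : p != 0 -> is_eigenpair f lambda ->
  2 * lambda * p_mass f = p_energy f.
Proof.
move=> p0 eig; have flux : \sum_x f x * \sum_(y | e x y) phip p (sigma x y * f y - f x)
    = - (lambda * p_mass f).
  rewrite /p_mass mulr_sumr -sumrN; apply: eq_bigr => x _.
  by rewrite (eigenpair_local_flux _ eig) -(mul_phip _ p0); ring.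
by apply: oppr_inj; rewrite -green_identity // flux; ring.
Qed.

Lemma balancing_flux_eq0 g f : balancing e sigma g ->
  \sum_x g x * \sum_(y | e x y) phip p (sigma x y * f y - f x) = 0.
Proof.
move=> [g_pm g_bal].
transitivity (\sum_x \sum_(y | e x y) phip p (g y * f y - g x * f x)).
  apply: eq_bigr => x _; rewrite mulr_sumr; apply: eq_bigr => y exy.
  by rewrite -phipMsign // mulrBr (g_bal _ _ exy) mulrA.
by apply: sum_edges_antisym => x y _; rewrite -phipN opprB.
Qed.

Lemma eigenpair_deg_gt0 f lambda x : is_eigenpair f lambda -> lambda != 0 ->
  f x != 0 -> (0 < deg e x)%N.
Proof.
move=> eig l0 fx0; rewrite lt0n; apply/eqP => d0; move: (eig x).
rewrite /signed_pLap d0 invr0 mul0r oppr0 => /esym/eqP.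
by rewrite mulf_eq0 (negbTE l0) phip_eq0 (negbTE fx0).
Qed.

Lemma p_mass_gt0 f lambda x : is_eigenpair f lambda -> lambda != 0 ->
  f x != 0 -> 0 < p_mass f.
Proof.
move=> eig l0 fx0; rewrite /p_mass (bigD1 x) //=; apply: ltr_pwDl.
  by rewrite mulr_gt0 ?ltr0n ?(eigenpair_deg_gt0 eig) // powR_gt0 // normr_gt0.
by apply: sumr_ge0 => y _; rewrite mulr_ge0 ?powR_ge0.
Qed.

Lemma p_mass_le f M : 0 <= p -> 0 <= M -> (forall x, `|f x| <= M) ->
  p_mass f <= vol R e * M `^ p.
Proof.
move=> p_ge0 M_ge0 f_le; rewrite /p_mass /vol mulr_suml.
apply: ler_sum => x _; rewrite ler_wpM2l //.
by apply: ge0_ler_powR; rewrite ?nnegrE ?f_le.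
Qed.

Lemma eigenvalue_gt0 f lambda x : p != 0 -> is_eigenpair f lambda -> lambda != 0 ->
  f x != 0 -> 0 < lambda.
Proof.
move=> p0 eig l0 fx0; have mass_gt0 := p_mass_gt0 eig l0 fx0.
have energy_ge0 : 0 <= p_energy f.
  by apply: sumr_ge0 => y _; apply: sumr_ge0 => z _; apply: powR_ge0.
have := rayleigh_identity p0 eig; rewrite lt_def l0 /=; nra.
Qed.

Lemma switched_eigenfunction_changes_sign g f lambda x0 :
  balancing e sigma g -> is_eigenpair f lambda -> lambda != 0 -> f x0 != 0 ->
  ~ (forall x, 0 <= g x * f x).
Proof.
move=> gbal eig l0 fx0 gf_ge0; have [g_pm _] := gbal.
have gx0 : g x0 != 0 by case: (g_pm x0) => ->; rewrite ?oppr_eq0 oner_eq0.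
have flux : \sum_x g x * \sum_(y | e x y) phip p (sigma x y * f y - f x)
    = - (lambda * \sum_x (deg e x)%:R * phip p (g x * f x)).
  rewrite mulr_sumr -sumrN; apply: eq_bigr => x _.
  by rewrite (eigenpair_local_flux _ eig) phipMsign //; ring.
have : 0 < \sum_x (deg e x)%:R * phip p (g x * f x).
  rewrite (bigD1 x0) //=; apply: ltr_pwDl.
    rewrite mulr_gt0 ?ltr0n ?(eigenpair_deg_gt0 eig) // phip_gt0 //.
    by rewrite lt_def mulf_neq0 ?gf_ge0.
  by apply: sumr_ge0 => x _; rewrite mulr_ge0 ?phip_ge0.
move: flux => /eqP; rewrite balancing_flux_eq0 // eq_sym oppr_eq0 mulf_eq0 (negbTE l0).
by move=> /eqP->; rewrite ltxx.
Qed.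

End Eigenpairs.

Section EigenvalueBound.
Variables (R : realType) (T : finType) (e : rel T) (sigma : T -> T -> R) (p : R).
Hypotheses (e_sym : symmetric e) (e_irr : irreflexive e) (e_conn : connected_graph e)
  (sigma_sign : signature e sigma) (p_gt1 : 1 < p).

Let p_gt0 : 0 < p. Proof. exact: lt_trans p_gt1. Qed.
Let p_neq0 : p != 0. Proof. by rewrite gt_eqF. Qed.

Lemma path_energy_bound (f : T -> R) x0 pa :
  path e x0 pa -> uniq (x0 :: pa) -> 0 <= f x0 ->
  path_sign sigma x0 pa * f (last x0 pa) <= 0 ->
  (2 * f x0) `^ p <= vol R e `^ (p - 1) * p_energy e sigma p f.
Proof.
move=> hpa upa fx0_ge0 last_le0.
pose a u := `|sigma u.1 u.2 * f u.2 - f u.1|.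
have a_swap u : e u.1 u.2 -> a (swap_pair u) = a u.
  case: u => x y /= exy; rewrite /a /=; have [sxy_sym sxy] := sigma_sign exy.
  by rewrite -sxy_sym; case: sxy => ->; rewrite ?mul1r ?mulN1r ?(distrC (f x)) // addrC.
set E := path_edges x0 pa.
have path_half : f x0 <= \sum_(u <- E) a u.
  apply: le_trans (path_sign_telescope sigma_sign f hpa).
  by apply: le_trans (ler_norm _); rewrite lerDl oppr_ge0.
have sum_swap : \sum_(u <- map swap_pair E) a u = \sum_(u <- E) a u.
  by rewrite big_map; apply: eq_big_seq => u /(path_edgesP hpa)/a_swap.
have E_edges : all (fun u => e u.1 u.2) (E ++ map swap_pair E).
  rewrite all_cat all_map; apply/andP; split; apply/allP => u /(path_edgesP hpa) //=.
  by rewrite e_sym.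
have two_le : 2 * f x0 <= \sum_(u <- darts e) a u.
  apply: le_trans (sum_le_darts (uniq_path_darts upa) E_edges (fun u => normr_ge0 _)).
  by rewrite big_cat sum_swap mulr_natl mulr2n lerD.
apply: le_trans (ge0_ler_powR (ltW p_gt0) _ _ two_le) _; rewrite ?nnegrE ?mulr_ge0 //.
  by apply: sumr_ge0 => u _; apply: normr_ge0.
rewrite (vol_darts e) p_energy_darts; exact: powR_sum_le (ltW p_gt1) (fun u => normr_ge0 _).
Qed.

Lemma eigenvalue_ge_of_path (f : T -> R) lambda x0 pa :
  is_eigenpair e sigma p f lambda -> lambda != 0 ->
  0 < f x0 -> (forall y, `|f y| <= f x0) ->
  path e x0 pa -> uniq (x0 :: pa) -> path_sign sigma x0 pa * f (last x0 pa) <= 0 ->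
  2^-1 * (2 / vol R e) `^ p <= lambda.
Proof.
move=> eig l0 fx0_gt0 fx0_max hpa upa last_le0; have fx0_neq0 := lt0r_neq0 fx0_gt0.
have lambda_gt0 := eigenvalue_gt0 e_sym sigma_sign p_neq0 eig l0 fx0_neq0.
have mass_le := p_mass_le e (ltW p_gt0) (ltW fx0_gt0) fx0_max.
have fp_gt0 : 0 < f x0 `^ p by apply: powR_gt0.
set V := vol R e in mass_le *.
have V_gt0 : 0 < V.
  rewrite -(pmulr_lgt0 _ fp_gt0); apply: lt_le_trans mass_le.
  exact: p_mass_gt0 eig l0 fx0_neq0.
have := path_energy_bound hpa upa (ltW fx0_gt0) last_le0.
rewrite -/V -(rayleigh_identity e_sym sigma_sign p_neq0 eig).
rewrite powRM ?(ltW fx0_gt0) // => bound.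
have key : 2 `^ p <= 2 * lambda * V `^ p.
  rewrite -(ler_pM2r fp_gt0); apply: (le_trans bound).
  have c_ge0 : 0 <= V `^ (p - 1) * (2 * lambda).
    by rewrite mulr_ge0 ?powR_ge0 // mulr_ge0 // ltW.
  rewrite mulrA; apply: (le_trans (ler_wpM2l c_ge0 mass_le)).
  rewrite -(mulr_powRB1 (ltW V_gt0) p_gt0).
  by rewrite le_eqVlt; apply/orP; left; apply/eqP; ring.
rewrite powRM ?invr_ge0 ?(ltW V_gt0) // -(powR_inv1 (ltW V_gt0)) powRAC.
rewrite powR_inv1 ?powR_ge0 // mulrA ler_pdivrMr ?powR_gt0 // mulrC ler_pdivrMr //.
by rewrite [_ * 2]mulrC mulrA.
Qed.

Lemma eigenvalue_ge_at_max (f : T -> R) lambda x0 :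
  is_eigenpair e sigma p f lambda -> lambda != 0 ->
  0 < f x0 -> (forall y, `|f y| <= f x0) ->
  2^-1 * (2 / vol R e) `^ p <= lambda.
Proof.
move=> eig l0 fx0_gt0 fx0_max.
case: (pselect (exists pa, [/\ path e x0 pa, uniq (x0 :: pa)
    & path_sign sigma x0 pa * f (last x0 pa) <= 0])) => [[pa [hpa upa]]|no_path].
  exact: eigenvalue_ge_of_path.
have f_bal : balancing e sigma (fun x => Num.sg (f x)).
  apply: (sg_balancing e_sym e_irr sigma_sign (e_conn x0)) => pa hpa upa.
  by rewrite ltNge; apply/negP => le0; apply: no_path; exists pa.
have [] := switched_eigenfunction_changes_sign e_sym f_bal eig l0 (lt0r_neq0 fx0_gt0).
by move=> x; rewrite -normrEsg.
Qed.

Lemma eigenvalue_ge (f : T -> R) lambda :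
  is_eigenpair e sigma p f lambda -> lambda != 0 -> (exists x, f x != 0) ->
  2^-1 * (2 / vol R e) `^ p <= lambda.
Proof.
move=> eig l0 [x1 fx1].
have [x0 _ x0_max] := @arg_maxP _ _ T x1 xpredT (fun x => `|f x|) isT.
have : f x0 != 0.
  by rewrite -normr_gt0 (lt_le_trans _ (x0_max x1 isT)) ?normr_gt0.
rewrite neq_lt => /orP[fx0_lt0|fx0_gt0].
  apply: (eigenvalue_ge_at_max (x0 := x0) (is_eigenpairN eig) l0).
    by rewrite oppr_gt0.
  by move=> y; rewrite normrN -(ltr0_norm fx0_lt0); apply: x0_max.
apply: (eigenvalue_ge_at_max eig l0 fx0_gt0) => y.
by rewrite -(gtr0_norm fx0_gt0); apply: x0_max.
Qed.

End EigenvalueBound.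

Theorem theorem4p3 (R : realType) (T : finType) (e : rel T)
  (sigma : T -> T -> R) (p : R) :
  simple_graph e -> connected_graph e -> signature e sigma -> 1 < p ->
  forall lambda : R, is_eigenvalue e sigma p lambda -> lambda != 0 ->
    lambda >= 2^-1 * powR (2 / (p * vol R e)) p.
Proof.
move=> [e_sym e_irr] e_conn sigma_sign p_gt1 lambda [f [f_nz eig]] l0.
have p_gt0 : 0 < p by apply: lt_trans p_gt1.
have vol_ge0 : 0 <= vol R e by apply: sumr_ge0.
apply: le_trans (eigenvalue_ge e_sym e_irr e_conn sigma_sign p_gt1 eig l0 f_nz).
rewrite ler_wpM2l ?invr_ge0 // ge0_ler_powR ?nnegrE ?(ltW p_gt0) //.
- by rewrite divr_ge0 // mulr_ge0 // ltW.
- by rewrite divr_ge0.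
- by rewrite invfM mulrCA ler_piMl ?divr_ge0 // invf_le1 // ltW.
Qed.
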